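(* Let $\Omega\subset\mathbb{R}^d$, let $\Phi$ be such that $K(x,y)=\Phi(x-y)$ is a symmetric positive definite kernel on $\Omega$, let $x_1,\dots,x_n\in\Omega$ be distinct, $y_1,\dots,y_n\in\mathbb{R}$, $\lambda>0$, let $\Theta$ be a parameter set and $y^s:\Omega\times\Theta\to\mathbb{R}$. Write $\mathbf{\Phi}=(\Phi(x_i-x_j))_{ij}$, $Y=(y_1,\dots,y_n)^T$, $y^s(X;\theta)=(y^s(x_1,\theta),\dots,y^s(x_n,\theta))^T$, $\zeta^\theta_i=y_i-y^s(x_i,\theta)$, and $$\hat\zeta^\theta=\operatorname*{argmin}_{g\in\mathcal{N}_\Phi(\Omega)}\frac1n\sum_{i=1}^n(\zeta_i^\theta-g(x_i))^2+\lambda\|g\|^2_{\mathcal{N}_\Phi(\Omega)}.$$ Then $$\operatorname*{argmin}_{\theta\in\Theta}(Y-y^s(X;\theta))^T(\mathbf{\Phi}+n\lambda I_n)^{-1}(Y-y^s(X;\theta))=\operatorname*{argmin}_{\theta\in\Theta}\frac1n\sum_{i=1}^n(\zeta_i^\theta-\hat\zeta^\theta(x_i))^2+\lambda\|\hat\zeta^\theta\|^2_{\mathcal{N}_\Phi(\Omega)},$$ i.e. the maximum likelihood estimator $\hat\theta$ defined by the left-hand side is characterized by the right-hand side.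
   Context: $\mathcal{N}_\Phi(\Omega)$ is the reproducing kernel Hilbert space: the completion of $\{\sum_{i=1}^n\beta_i\Phi(\cdot-x_i):\beta_i\in\mathbb{R},x_i\in\Omega\}$ under $\langle\sum_i\beta_i\Phi(\cdot-x_i),\sum_j\gamma_j\Phi(\cdot-x'_j)\rangle=\sum_{i,j}\beta_i\gamma_j\Phi(x_i-x'_j)$. *)

From HB Require Import structures.
From mathcomp Require Import all_boot all_order all_algebra.
From mathcomp Require Import all_classical all_reals all_analysis.
Set Implicit Arguments. Unset Strict Implicit. Unset Printing Implicit Defensive.
Import Order.TTheory GRing.Theory Num.Theory.
Import numFieldNormedType.Exports.
Local Open Scope classical_set_scope.
Local Open Scope ring_scope.

Section Native.
Variables (R : realType) (d : nat).
Notation pt := 'rV[R]_d.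

Definition spd_kernel (Phi : pt -> R) (Omega : set pt) : Prop :=
  (forall x y, Omega x -> Omega y -> Phi (x - y) = Phi (y - x)) /\
  (forall (m : nat) (z : 'I_m -> pt) (beta : 'I_m -> R),
      (forall i, Omega (z i)) -> injective z -> (exists i, beta i != 0) ->
      0 < \sum_(i < m) \sum_(j < m) beta i * beta j * Phi (z i - z j)).

(* An element sum_i beta_i Phi(. - x_i) of the pre-Hilbert space, as a list of
   (beta_i, x_i). *)
Definition comb := seq (R * pt).

Definition comb_eval (Phi : pt -> R) (f : comb) (z : pt) : R :=
  \sum_(p <- f) p.1 * Phi (z - p.2).

Definition comb_sqnorm (Phi : pt -> R) (f : comb) : R :=
  \sum_(p <- f) \sum_(q <- f) p.1 * q.1 * Phi (p.2 - q.2).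

Definition comb_opp (f : comb) : comb := [seq (- p.1, p.2) | p <- f].

Definition comb_in (Omega : set pt) (f : comb) : Prop :=
  forall p, p \in f -> Omega p.2.

(* g belongs to the completion N_Phi(Omega) with squared norm s: g is the
   (pointwise on Omega) limit of a Cauchy sequence f_k of the pre-Hilbert space,
   and s = lim ||f_k||^2. *)
Definition native_sqnorm (Phi : pt -> R) (Omega : set pt) (g : pt -> R) (s : R)
  : Prop :=
  exists f : nat -> comb,
    (forall k, comb_in Omega (f k)) /\
    (forall e : R, 0 < e -> exists N : nat, forall k m : nat, (N <= k)%N -> (N <= m)%N ->
        comb_sqnorm Phi (f k ++ comb_opp (f m)) < e) /\
    (forall z, Omega z -> (fun k => comb_eval Phi (f k) z) @ \oo --> g z) /\
    ((fun k => comb_sqnorm Phi (f k)) @ \oo --> s).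

Definition in_native (Phi : pt -> R) (Omega : set pt) (g : pt -> R) : Prop :=
  exists s, native_sqnorm Phi Omega g s.

Definition reg_obj (n : nat) (x : 'I_n -> pt) (zeta : 'I_n -> R) (lambda : R)
  (g : pt -> R) (s : R) : R :=
  n%:R^-1 * \sum_(i < n) (zeta i - g (x i)) ^+ 2 + lambda * s.

Definition is_reg_minimizer (Phi : pt -> R) (Omega : set pt) (n : nat)
  (x : 'I_n -> pt) (zeta : 'I_n -> R) (lambda : R) (g : pt -> R) (s : R) : Prop :=
  native_sqnorm Phi Omega g s /\
  forall h t, native_sqnorm Phi Omega h t ->
    reg_obj x zeta lambda g s <= reg_obj x zeta lambda h t.

Definition kernel_mx (Phi : pt -> R) (n : nat) (x : 'I_n -> pt) : 'M[R]_n :=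
  \matrix_(i, j) Phi (x i - x j).

Definition mle_obj (Phi : pt -> R) (n : nat) (x : 'I_n -> pt) (lambda : R)
  (r : 'cV[R]_n) : R :=
  ((r^T *m invmx (kernel_mx Phi x + (n%:R * lambda)%:M)) *m r) 0 0.

End Native.

From HB Require Import structures.
From mathcomp Require Import all_boot all_order all_algebra.
From mathcomp Require Import all_classical all_reals all_analysis.
From mathcomp Require Import ring lra.
Set Implicit Arguments.
Unset Strict Implicit.
Unset Printing Implicit Defensive.
Import Order.TTheory GRing.Theory Num.Theory.
Import numFieldNormedType.Exports.
Local Open Scope classical_set_scope.
Local Open Scope ring_scope.

(* The regularized problem is minimized by the kernel interpolant
   g = sum_j c_j Phi(. - x_j) whose coefficients solve (Phi + n lambda I) c = zeta,
   with value lambda zeta^T (Phi + n lambda I)^-1 zeta.  Indeed, for any h in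
   the native space, ||h - g||^2 >= 0 passes to the limit along the defining
   Cauchy sequence and gives ||h||^2 >= 2 <h, g> - ||g||^2, where
   <h, g> = sum_j c_j h(x_j); completing the square then bounds the objective
   at h from below by the value at g.  Hence, for every theta, the minimal
   regularized objective is lambda > 0 times the likelihood objective, and the
   two have the same minimizers in theta. *)

Lemma big_undup_partition {R : Type} {idx : R} {op : Monoid.com_law idx}
    {I J : eqType} (r : seq I) (key : I -> J) (F : I -> R) :
  \big[op/idx]_(i <- r) F i =
  \big[op/idx]_(j <- undup (map key r)) \big[op/idx]_(i <- r | key i == j) F i.
Proof.
under [RHS]eq_bigr => j _ do rewrite big_mkcond.
rewrite exchange_big /= big_seq [RHS]big_seq; apply: eq_bigr => i ri.
under eq_bigr => j _ do rewrite eq_sym.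
rewrite -big_mkcond -big_filter filter_pred1_uniq ?undup_uniq ?big_seq1 //.
by rewrite mem_undup map_f.
Qed.

Lemma psd_add_scalar_unitmx (R : realFieldType) (n : nat) (K : 'M[R]_n) (mu : R) :
  (forall v : 'rV[R]_n, 0 <= (v *m K *m v^T) 0 0) -> 0 < mu ->
  K + mu%:M \in unitmx.
Proof.
move=> K_psd mu_gt0; rewrite unitmxE unitfE; apply/negP => /det0P[v v_neq0 vA0].
have vv_gt0 : 0 < (v *m v^T) 0 0.
  rewrite mxE lt_def sumr_ge0 ?andbT => [|i _]; last by rewrite mxE -expr2 sqr_ge0.
  apply: contra v_neq0 => /eqP/psumr_eq0P vv0; apply/eqP/rowP => i.
  rewrite mxE; apply/eqP; rewrite -sqrf_eq0 expr2 -{2}[v]trmxK mxE vv0 // => j _.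
  by rewrite mxE -expr2 sqr_ge0.
have : (v *m (K + mu%:M) *m v^T) 0 0 = 0 by rewrite vA0 mul0mx mxE.
rewrite mulmxDr mul_mx_scalar mulmxDl -scalemxAl mxE [X in _ + X]mxE => /eqP.
by apply/negP; rewrite gt_eqF // ltr_wpDl ?K_psd ?mulr_gt0.
Qed.

Lemma mx_qformE (R : pzSemiRingType) (n : nat) (A : 'M[R]_n) (c : 'cV[R]_n) :
  (c^T *m A *m c) 0 0 = \sum_i c i 0 * (A *m c) i 0.
Proof. by rewrite -mulmxA mxE; apply: eq_bigr => i _; rewrite mxE. Qed.

Section Combinations.
Variables (R : realType) (d : nat) (Phi : 'rV[R]_d -> R) (Omega : set 'rV[R]_d).
Hypothesis Phi_spd : spd_kernel Phi Omega.
Implicit Types f g : comb R d.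

Definition comb_dot f g : R :=
  \sum_(p <- f) \sum_(q <- g) p.1 * q.1 * Phi (p.2 - q.2).

Lemma comb_sqnormE f : comb_sqnorm Phi f = comb_dot f f.
Proof. by []. Qed.

Lemma comb_dotE f g : comb_dot f g = \sum_(p <- f) p.1 * comb_eval Phi g p.2.
Proof.
apply: eq_bigr => p _; rewrite mulr_sumr.
by apply: eq_bigr => q _; rewrite mulrA.
Qed.

Lemma comb_dot_catl f1 f2 g :
  comb_dot (f1 ++ f2) g = comb_dot f1 g + comb_dot f2 g.
Proof. exact: big_cat. Qed.

Lemma comb_dot_catr f g1 g2 :
  comb_dot f (g1 ++ g2) = comb_dot f g1 + comb_dot f g2.
Proof. by rewrite -big_split; apply: eq_bigr => p _; rewrite big_cat. Qed.

Lemma comb_dot_oppl f g : comb_dot (comb_opp f) g = - comb_dot f g.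
Proof.
rewrite /comb_dot big_map -sumrN; apply: eq_bigr => p _.
by rewrite -sumrN; apply: eq_bigr => q _; rewrite !mulNr.
Qed.

Lemma comb_dot_oppr f g : comb_dot f (comb_opp g) = - comb_dot f g.
Proof.
rewrite /comb_dot -sumrN; apply: eq_bigr => p _.
by rewrite big_map -sumrN; apply: eq_bigr => q _; rewrite mulrN mulNr.
Qed.

Lemma comb_sqnorm_sub f g :
  comb_sqnorm Phi (f ++ comb_opp g) =
  comb_sqnorm Phi f - comb_dot f g - comb_dot g f + comb_sqnorm Phi g.
Proof.
rewrite !comb_sqnormE comb_dot_catl !comb_dot_catr !comb_dot_oppl !comb_dot_oppr.
by rewrite opprK addrA.
Qed.

Lemma comb_in_sub {f g} :
  comb_in Omega f -> comb_in Omega g -> comb_in Omega (f ++ comb_opp g).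
Proof. by move=> fO gO p; rewrite mem_cat => /orP[/fO|/mapP[q /gO ? ->]]. Qed.

Lemma comb_dotC {f g} :
  comb_in Omega f -> comb_in Omega g -> comb_dot f g = comb_dot g f.
Proof.
move=> fO gO; rewrite /comb_dot exchange_big big_seq [RHS]big_seq.
apply: eq_bigr => q qg; rewrite big_seq [RHS]big_seq; apply: eq_bigr => p pf.
by rewrite (Phi_spd.1 _ _ (fO p pf) (gO q qg)) (mulrC p.1).
Qed.

Definition comb_weight f (z : 'rV[R]_d) : R := \sum_(p <- f | p.2 == z) p.1.

(* Merging repeated centres, so that positive definiteness, stated for distinct
   points, applies. *)
Lemma comb_sqnorm_merged f :
  comb_sqnorm Phi f = \sum_(z <- undup (map snd f)) \sum_(w <- undup (map snd f))
    comb_weight f z * comb_weight f w * Phi (z - w).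
Proof.
rewrite /comb_sqnorm (big_undup_partition _ snd); apply: eq_bigr => z _.
under eq_bigr => p _ do rewrite (big_undup_partition _ snd).
rewrite exchange_big; apply: eq_bigr => w _.
rewrite !mulr_suml; apply: eq_bigr => p /eqP pz.
rewrite mulr_sumr mulr_suml; apply: eq_bigr => q /eqP qw.
by rewrite pz qw.
Qed.

Lemma comb_sqnorm_ge0 {f} : comb_in Omega f -> 0 <= comb_sqnorm Phi f.
Proof.
move=> fO; rewrite comb_sqnorm_merged; set S := undup (map snd f).
rewrite (big_nth 0) big_mkord.
under eq_bigr => i _ do rewrite (big_nth 0) big_mkord.
have [[i wi]|w0] :=
  pselect (exists i : 'I_(size S), comb_weight f (nth 0 S i) != 0).
  apply/ltW/(Phi_spd.2 _ (fun i => nth 0 S i)) => [j|j k /eqP|]; last by exists i.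
  - have /mapP[p /fO ? ->] : nth 0 S j \in map snd f by rewrite -mem_undup mem_nth.
    done.
  - by rewrite nth_uniq ?undup_uniq // => /eqP/val_inj.
rewrite big1 // => j _; rewrite big1 // => k _.
suff -> : comb_weight f (nth 0 S j) = 0 by rewrite !mul0r.
by apply/eqP; apply: contra_notT w0 => ?; exists j.
Qed.

Lemma native_sqnorm_comb f : comb_in Omega f ->
  native_sqnorm Phi Omega (comb_eval Phi f) (comb_sqnorm Phi f).
Proof.
move=> fO; exists (fun=> f); split=> //.
split; last by split=> [z _|]; apply: cvg_cst.
move=> e e_gt0; exists 0%N => k m _ _.
by rewrite comb_sqnorm_sub comb_sqnormE subrr sub0r addNr.
Qed.

Lemma native_sqnorm_ge g h t : comb_in Omega g -> native_sqnorm Phi Omega h t ->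
  2 * \sum_(q <- g) q.1 * h q.2 - comb_sqnorm Phi g <= t.
Proof.
move=> gO [f [fO [_ [f_h f_t]]]].
pose dist k := comb_sqnorm Phi (f k) - (2 * comb_dot g (f k) - comb_sqnorm Phi g).
have dist_ge0 k : 0 <= dist k.
  have := comb_sqnorm_ge0 (comb_in_sub (fO k) gO).
  by rewrite comb_sqnorm_sub (comb_dotC (fO k) gO) /dist; lra.
have dist_cvg :
    dist @ \oo --> t - (2 * \sum_(q <- g) q.1 * h q.2 - comb_sqnorm Phi g).
  apply: cvgB => //; apply: cvgB; last exact: cvg_cst.
  apply: cvgMl_tmp; under eq_cvg do rewrite comb_dotE big_seq.
  rewrite big_seq; apply: cvg_big => [|q qg]; first exact: add_continuous.
  exact: cvgMl_tmp (f_h _ (gO q qg)).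
by rewrite -subr_ge0; apply: (cvgr_to_ge dist_cvg); apply: nearW.
Qed.

End Combinations.

Section KernelInterpolant.
Variables (R : realType) (d : nat) (Phi : 'rV[R]_d -> R) (Omega : set 'rV[R]_d).
Variables (n : nat) (x : 'I_n -> 'rV[R]_d).
Hypothesis Phi_spd : spd_kernel Phi Omega.
Hypothesis x_in : forall i, Omega (x i).

Definition comb_of (c : 'cV[R]_n) : comb R d :=
  [seq (c i 0, x i) | i <- enum 'I_n].

Lemma comb_of_in c : comb_in Omega (comb_of c).
Proof. by move=> p /mapP[i _ ->]; apply: x_in. Qed.

Lemma comb_eval_comb_of c i :
  comb_eval Phi (comb_of c) (x i) = (kernel_mx Phi x *m c) i 0.
Proof.
rewrite /comb_eval big_map big_enum mxE.
by apply: eq_bigr => j _; rewrite mxE mulrC.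
Qed.

Lemma comb_sqnorm_comb_of c :
  comb_sqnorm Phi (comb_of c) = (c^T *m kernel_mx Phi x *m c) 0 0.
Proof.
rewrite /comb_sqnorm big_map big_enum -mulmxA mxE; apply: eq_bigr => i _ /=.
rewrite big_map big_enum !mxE mulr_sumr; apply: eq_bigr => j _ /=.
by rewrite !mxE mulrAC -mulrA.
Qed.

Lemma kernel_mx_psd (v : 'rV[R]_n) : 0 <= (v *m kernel_mx Phi x *m v^T) 0 0.
Proof.
rewrite -[X in X *m kernel_mx _ _]trmxK -comb_sqnorm_comb_of.
by apply: (comb_sqnorm_ge0 Phi_spd); apply: comb_of_in.
Qed.

Lemma kernel_add_scalar_unitmx lambda : 0 < lambda ->
  kernel_mx Phi x + (n%:R * lambda)%:M \in unitmx.
Proof.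
move=> lambda_gt0; case: n x kernel_mx_psd => [|m] y y_psd.
  by rewrite unitmxE det_mx00 unitr1.
by apply: psd_add_scalar_unitmx => //; rewrite mulr_gt0.
Qed.

End KernelInterpolant.

Section RegularizedFit.
Variables (R : realType) (d : nat) (Phi : 'rV[R]_d -> R) (Omega : set 'rV[R]_d).
Variables (n : nat) (x : 'I_n -> 'rV[R]_d) (zeta : 'I_n -> R) (lambda : R).
Hypothesis Phi_spd : spd_kernel Phi Omega.
Hypothesis x_in : forall i, Omega (x i).
Hypothesis lambda_ge0 : 0 <= lambda.
Variable c : 'cV[R]_n.
Hypothesis c_solves :
  (kernel_mx Phi x + (n%:R * lambda)%:M) *m c = \col_i zeta i.

Let Kc := kernel_mx Phi x *m c.

Lemma zeta_kernel_expansion i : zeta i = Kc i 0 + n%:R * lambda * c i 0.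
Proof.
transitivity ((\col_j zeta j) i 0); first by rewrite mxE.
by rewrite -c_solves mulmxDl mul_scalar_mx mxE [X in _ + X]mxE.
Qed.

Let reg_lb (u : 'I_n -> R) := n%:R^-1 * \sum_i (zeta i - u i) ^+ 2
  + lambda * (2 * \sum_i c i 0 * u i - \sum_i c i 0 * Kc i 0).

Lemma reg_lbE u : reg_lb u =
  lambda * \sum_i zeta i * c i 0 + n%:R^-1 * \sum_i (Kc i 0 - u i) ^+ 2.
Proof.
rewrite /reg_lb !mulr_sumr -sumrB mulr_sumr -!big_split.
apply: eq_bigr => i _ /=.
have n_neq0 : n%:R != 0 :> R.
  by rewrite pnatr_eq0 -lt0n (leq_ltn_trans _ (ltn_ord i)).
by rewrite (zeta_kernel_expansion i); field.
Qed.

Lemma reg_obj_ge_lb h t : native_sqnorm Phi Omega h t ->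
  reg_lb (h \o x) <= reg_obj x zeta lambda h t.
Proof.
move=> ht; rewrite /reg_lb /reg_obj lerD2l ler_wpM2l //.
have := native_sqnorm_ge Phi_spd (comb_of_in x_in (c:=c)) ht.
by rewrite big_map big_enum comb_sqnorm_comb_of mx_qformE.
Qed.

Lemma reg_obj_comb_of :
  reg_obj x zeta lambda (comb_eval Phi (comb_of x c))
    (comb_sqnorm Phi (comb_of x c)) = lambda * \sum_i zeta i * c i 0.
Proof.
transitivity (reg_lb (fun i => Kc i 0)).
  rewrite /reg_obj /reg_lb comb_sqnorm_comb_of mx_qformE.
  under eq_bigr do rewrite comb_eval_comb_of.
  by rewrite mulr_natl mulr2n addrK.
rewrite reg_lbE -[RHS]addr0; congr (_ + _).
by rewrite big1 ?mulr0 // => i _; rewrite subrr expr0n.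
Qed.

Lemma reg_minimizer_value_solution g s :
  is_reg_minimizer Phi Omega x zeta lambda g s ->
  reg_obj x zeta lambda g s = lambda * \sum_i zeta i * c i 0.
Proof.
move=> [gs g_min]; apply/le_anti/andP; split.
  rewrite -reg_obj_comb_of; apply: g_min.
  by apply: native_sqnorm_comb; apply: comb_of_in.
apply: le_trans (reg_obj_ge_lb gs); rewrite reg_lbE lerDl.
by rewrite mulr_ge0 ?invr_ge0 ?ler0n ?sumr_ge0 // => i _; apply: sqr_ge0.
Qed.

End RegularizedFit.

Lemma mle_objE (R : realType) (d : nat) (Phi : 'rV[R]_d -> R) (n : nat)
    (x : 'I_n -> 'rV[R]_d) (lambda : R) (r c : 'cV[R]_n) :
  kernel_mx Phi x + (n%:R * lambda)%:M \in unitmx ->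
  (kernel_mx Phi x + (n%:R * lambda)%:M) *m c = r ->
  mle_obj Phi x lambda r = \sum_i r i 0 * c i 0.
Proof.
move=> A_unit <-; rewrite /mle_obj -mulmxA mulKmx // mxE.
by apply: eq_bigr => i _; rewrite mxE.
Qed.

Lemma reg_minimizer_value (R : realType) (d : nat) (Omega : set 'rV[R]_d)
    (Phi : 'rV[R]_d -> R) (n : nat) (x : 'I_n -> 'rV[R]_d) (zeta : 'I_n -> R)
    (lambda : R) (g : 'rV[R]_d -> R) (s : R) :
  spd_kernel Phi Omega -> (forall i, Omega (x i)) -> 0 < lambda ->
  is_reg_minimizer Phi Omega x zeta lambda g s ->
  reg_obj x zeta lambda g s = lambda * mle_obj Phi x lambda (\col_i zeta i).
Proof.
move=> Phi_spd x_in lambda_gt0 g_min.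
have A_unit := kernel_add_scalar_unitmx Phi_spd x_in lambda_gt0.
have c_solves := mulKVmx A_unit (\col_i zeta i).
rewrite (mle_objE A_unit c_solves).
rewrite (reg_minimizer_value_solution Phi_spd x_in (ltW lambda_gt0) c_solves g_min).
by congr (_ * _); apply: eq_bigr => i _; rewrite mxE.
Qed.

Theorem theorem3p1 (R : realType) (d : nat) (Omega : set 'rV[R]_d)
  (Phi : 'rV[R]_d -> R) (n : nat) (x : 'I_n -> 'rV[R]_d) (y : 'I_n -> R)
  (lambda : R) (Theta : Type) (ys : 'rV[R]_d -> Theta -> R)
  (zhat : Theta -> 'rV[R]_d -> R) (shat : Theta -> R) :
  spd_kernel Phi Omega ->
  (forall i, Omega (x i)) -> injective x ->
  0 < lambda ->
  (* zhat theta is the argmin defining \hat zeta^theta, shat theta its squared norm *)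
  (forall theta, is_reg_minimizer Phi Omega x (fun i => y i - ys (x i) theta) lambda
                   (zhat theta) (shat theta)) ->
  forall theta0 : Theta,
    (forall theta : Theta,
       mle_obj Phi x lambda (\col_i (y i - ys (x i) theta0))
       <= mle_obj Phi x lambda (\col_i (y i - ys (x i) theta))) <->
    (forall theta : Theta,
       reg_obj x (fun i => y i - ys (x i) theta0) lambda (zhat theta0) (shat theta0)
       <= reg_obj x (fun i => y i - ys (x i) theta) lambda (zhat theta) (shat theta)).
Proof.
move=> Phi_spd x_in _ lambda_gt0 zhat_min theta0.
have value theta := reg_minimizer_value Phi_spd x_in lambda_gt0 (zhat_min theta).
by split=> le_theta0 theta; move: (le_theta0 theta); rewrite !value ler_pM2l.
Qed.
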